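(* Let $m_0 = 1$ if $d = 1$ and $m_0 = \frac32$ if $d \geq 2$. For all real $s \geq 0$ and all zero-mean $u \in H^s_0(\mathbb{T}^d,\mathbb{C}) \cap H^{m_0}_0(\mathbb{T}^d,\mathbb{C})$, with $v := \overline{u}$, the vector field $W_5(u,v) = ((W_5)_1(u,v), (W_5)_2(u,v))$ defined below satisfies \[ \|(W_5)_1(u,v)\|_s + \|(W_5)_2(u,v)\|_s \leq C\, \|u\|_{m_0}^4 \|u\|_s, \] where $C$ is a universal constant.
   Context: $\mathbb{T}^d = (\mathbb{R}/2\pi\mathbb{Z})^d$. Zero-mean functions are written $u = \sum_{j\in\mathbb{Z}^d\setminus\{0\}} u_j e^{ij\cdot x}$, $\|u\|_s^2 := \sum_{j\neq0}|u_j|^2|j|^{2s}$, and $H^s_0(\mathbb{T}^d,\mathbb{C})$ is the space of zero-mean $u$ with $\|u\|_s<\infty$; $|\cdot|$ is the Euclidean norm. $\delta_a^b = 1$ if $a=b$ and $0$ otherwise; a quotient of the form $(1-\delta_a^b)/(a-b)$ is defined to be $0$ when $a=b$. All sums run over $j,\ell,k \in \mathbb{Z}^d\setminus\{0\}$ subject to the indicated constraints. For complex-conjugate pairs $(u,v)$, $v=\overline u$ (so $v_j = \overline{u_{-j}}$), \[ (W_5)_1(u,v) = \tfrac{i}{32}\!\!\sum_{|j|=|\ell|}\!\! u_ju_{-j}v_\ell v_{-\ell}u_k e^{ik\cdot x}|j|^2|\ell|^2\Big(\tfrac{1}{|j|+|k|} - \tfrac{1-\delta_{|\ell|}^{|k|}}{|\ell|-|k|}\Big)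 + \tfrac{3i}{32}\!\!\sum_{|k|=|j|+|\ell|}\!\! u_ju_{-j}u_\ell u_{-\ell}v_k e^{ik\cdot x}|j||\ell||k| \] \[ + \tfrac{i}{16}\!\!\sum_{|j|=|k|}\!\! u_ju_{-j}u_\ell v_{-\ell}v_k e^{ik\cdot x}|j|^2|\ell|\Big(6 + \tfrac{|\ell|}{|\ell|+|j|} + \tfrac{|\ell|(1-\delta_{|\ell|}^{|j|})}{|\ell|-|j|}\Big) + \tfrac{3i}{16}\!\!\sum_{|k|=|j|-|\ell|}\!\! u_ju_{-j}v_\ell v_{-\ell}v_k e^{ik\cdot x}|j||\ell||k|, \] and $(W_5)_2(u,v)$ is obtained from $(W_5)_1(u,v)$ by exchanging the roles of $u$ and $v$ everywhere and multiplying by $-1$ (equivalently, $(W_5)_2(u,\overline u) = \overline{(W_5)_1(u,\overline u)}$). *)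

From HB Require Import structures.
From mathcomp Require Import all_boot all_order all_algebra.
From mathcomp Require Import complex.
From mathcomp Require Import all_classical all_reals all_analysis.
Set Implicit Arguments. Unset Strict Implicit. Unset Printing Implicit Defensive.
Import Order.TTheory GRing.Theory Num.Theory ComplexField.

Local Open Scope classical_set_scope.
Local Open Scope ring_scope.
Local Open Scope complex_scope.

Section Defs.
Variable R : realType.

(* Fourier indices j ∈ Z^d, as integer row vectors. *)
Definition idx (d : nat) := 'rV[int]_d.

Definition inorm d (j : idx d) : R :=
  Num.sqrt (\sum_(i < d) ((j ord0 i)%:~R : R) ^+ 2).

(* A (zero-mean) function on T^d is represented by its Fourier coefficient
   family u : Z^d -> C (u j = u_j). *)
Definition fcoef d := idx d -> R[i].

Definition Hnorm2 d (s : R) (u : fcoef d) : \bar R :=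
  (\esum_(j in [set j : idx d | (j != 0)%R]) ((ComplexField.Normc.normc (u j)) ^+ 2 * (inorm j) `^ (2 * s))%:E)%E.

(* ||u||_s  (= +oo iff u is not in H^s). *)
Definition Hnorm d (s : R) (u : fcoef d) : \bar R :=
  match Hnorm2 s u with
  | EFin r => (Num.sqrt r)%:E
  | _ => +oo%E
  end.

(* Unordered sum over a set D of a complex family; it is the genuine
   (absolutely convergent) sum whenever the family is absolutely summable. *)
Definition rsum (T : choiceType) (D : set T) (f : T -> R) : R :=
  fine (\esum_(x in D) (Num.max (f x) 0)%:E)%E - fine (\esum_(x in D) (Num.max (- f x) 0)%:E)%E.

Definition csum (T : choiceType) (D : set T) (f : T -> R[i]) : R[i] :=
  (rsum D (fun x => complex.Re (f x)))%:C + 'i * (rsum D (fun x => complex.Im (f x)))%:C.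

(* (1 - δ_a^b)/(a - b), defined to be 0 when a = b. *)
Definition qd (a b : R) : R := if a == b then 0 else 1 / (a - b).

Definition W51 d (u v : fcoef d) (k : idx d) : R[i] :=
  if k == 0 then 0 else
  let n := @inorm d in
  let C (r : R) : R[i] := r%:C in
  let P (c : idx d -> idx d -> Prop) :=
      [set p : idx d * idx d | p.1 != 0 /\ p.2 != 0 /\ c p.1 p.2] in
    'i / 32%:R * csum (P (fun j l => n j = n l))
      (fun p => let j := p.1 in let l := p.2 in
        u j * u (- j) * v l * v (- l) * u k
        * C (n j ^+ 2 * n l ^+ 2 * (1 / (n j + n k) - qd (n l) (n k))))
  + 3%:R * 'i / 32%:R * csum (P (fun j l => n k = n j + n l))
      (fun p => let j := p.1 in let l := p.2 in
        u j * u (- j) * u l * u (- l) * v k * C (n j * n l * n k))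
  + 'i / 16%:R * csum (P (fun j l => n j = n k))
      (fun p => let j := p.1 in let l := p.2 in
        u j * u (- j) * u l * v (- l) * v k
        * C (n j ^+ 2 * n l * (6%:R + n l / (n l + n j) + n l * qd (n l) (n j))))
  + 3%:R * 'i / 16%:R * csum (P (fun j l => n k = n j - n l))
      (fun p => let j := p.1 in let l := p.2 in
        u j * u (- j) * v l * v (- l) * v k * C (n j * n l * n k)).

Definition W52 d (u v : fcoef d) (k : idx d) : R[i] := - W51 v u k.

(* v = conj u, i.e. v_j = conj (u_{-j}). *)
Definition cconj d (u : fcoef d) : fcoef d := fun j => conjc (u (- j)).

Definition m0 (d : nat) : R := if d == 1%N then 1 else 3%:R / 2%:R.

End Defs.

From HB Require Import structures.
From mathcomp Require Import all_boot all_order all_algebra.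
From mathcomp Require Import complex.
From mathcomp Require Import all_classical all_reals all_analysis.
From mathcomp Require Import zify lra ring.
Import Order.TTheory GRing.Theory Num.Theory ComplexField.
Local Open Scope ring_scope.
Local Open Scope complex_scope.
Set Implicit Arguments.
Unset Strict Implicit.

(* The estimate is proved coefficientwise in Fourier space.  Put
   N = ||u||_{m0}^2, v = conj u and w(t) = t^{2 m0}.

   1. Each of the four sums defining (W_5)_1(u,v)_k has the shape
        sum_{(j,l) in P} x_j y_{-j} x'_l y'_{-l} z r(j,l),
      with x, y, x', y' in {u, v} and z in {u_k, v_k}, and on its constraint
      set P the multiplier satisfies |r(j,l)| <= 10 w(|j|) w(|l|).  The only
      delicate factor is (1 - δ_a^b)/(a - b) evaluated at lattice norms: it is
      bounded by 3 |j|^{2 m0 - 2}, because |j| is an integer when d = 1 and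
      |j|^2 is an integer in general.
   2. The double sum therefore factors into two weighted pair sums
      sum_j |x_j| |y_{-j}| w(|j|), each at most 2N by AM-GM, which gives
      |(W_5)_i(u,v)_k| <= 160 (2N)^2 (|u_k| + |v_k|) for k <> 0.
   3. Summing the square of this pointwise bound against |k|^{2s} and using
      ||v||_s = ||u||_s yields ||(W_5)_i||_s <= 2 * 160 (2N)^2 ||u||_s. *)

Local Notation nc := Normc.normc.

Definition nzidx d : set (idx d) := [set j : idx d | j != 0].
Arguments nzidx : clear implicits.

Section Estimates.
Variable R : realType.

Lemma nc_ge0 (z : R[i]) : 0 <= nc z.
Proof. by case: z => a b; rewrite /Normc.normc sqrtr_ge0. Qed.

Lemma nc_real (r : R) : nc (r%:C) = `|r|.
Proof. by rewrite /Normc.normc /= expr0n /= addr0 sqrtr_sqr. Qed.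

Lemma nc_i : nc ('i : R[i]) = 1.
Proof. by rewrite /Normc.normc /= expr0n /= add0r expr1n sqrtr1. Qed.

Lemma nc_nat (n : nat) : nc (n%:R : R[i]) = n%:R.
Proof. by rewrite -(rmorph_nat (real_complex R)) nc_real ger0_norm. Qed.

Lemma nc_conj (z : R[i]) : nc (conjc z) = nc z.
Proof. by case: z => a b; rewrite /Normc.normc /= sqrrN. Qed.

Lemma nc_Re (z : R[i]) : `|complex.Re z| <= nc z.
Proof.
case: z => a b; rewrite /Normc.normc /= -(sqrtr_sqr a) ler_sqrt ?addr_ge0 ?sqr_ge0 //.
by rewrite lerDl sqr_ge0.
Qed.

Lemma nc_Im (z : R[i]) : `|complex.Im z| <= nc z.
Proof.
case: z => a b; rewrite /Normc.normc /= -(sqrtr_sqr b) ler_sqrt ?addr_ge0 ?sqr_ge0 //.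
by rewrite lerDr sqr_ge0.
Qed.

Lemma nc_idiv (b : nat) : (0 < b)%N -> nc ('i / b%:R : R[i]) <= 1.
Proof.
move=> b0; rewrite Normc.normcM Normc.normcV nc_i nc_nat mul1r.
by rewrite invf_le1 ?ler1n ?ltr0n.
Qed.

Lemma nc_natidiv (a b : nat) : (a <= b)%N -> (0 < b)%N -> nc (a%:R * 'i / b%:R : R[i]) <= 1.
Proof.
move=> ab b0; rewrite !Normc.normcM Normc.normcV !nc_nat nc_i mulr1.
by rewrite ler_pdivrMr ?ltr0n // mul1r ler_nat.
Qed.

Lemma nc_lincomb4 (c1 c2 c3 c4 S1 S2 S3 S4 : R[i]) :
  nc c1 <= 1 -> nc c2 <= 1 -> nc c3 <= 1 -> nc c4 <= 1 ->
  nc (c1 * S1 + c2 * S2 + c3 * S3 + c4 * S4) <= nc S1 + nc S2 + nc S3 + nc S4.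
Proof.
have scale (c S : R[i]) : nc c <= 1 -> nc (c * S) <= nc S.
  by move=> hc; rewrite Normc.normcM; apply: ler_piMl; rewrite ?nc_ge0.
move=> h1 h2 h3 h4.
apply: le_trans (le_normcD _ _) _; apply: lerD; last exact: scale.
apply: le_trans (le_normcD _ _) _; apply: lerD; last exact: scale.
by apply: le_trans (le_normcD _ _) _; apply: lerD; apply: scale.
Qed.

Lemma esum_subset_le (T : choiceType) (A B : set T) (f : T -> \bar R) :
  (A `<=` B)%classic -> (forall x, B x -> (0 <= f x)%E) ->
  (\esum_(x in A) f x <= \esum_(x in B) f x)%E.
Proof.
move=> AB f0; rewrite (esum_mkcond A) (esum_mkcond B); apply: le_esum => x _.
case: ifPn => xA; first by rewrite ifT // inE; apply: AB; rewrite -inE.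
by case: ifPn => // /[!inE] /f0.
Qed.

Lemma esumZ_le (T : choiceType) (D : set T) (c : R) (a : T -> \bar R) :
  0 <= c -> (forall x, (0 <= a x)%E) ->
  (\esum_(x in D) (c%:E * a x) <= c%:E * \esum_(x in D) a x)%E.
Proof.
move=> c0 a0; apply: ge_ereal_sup => _ [X [finX XD]] <-.
rewrite -ge0_mule_fsumr // lee_wpmul2l ?lee_fin //.
by apply: ereal_sup_ubound; exists X.
Qed.

Lemma esum_prod_le (T : choiceType) (A B : set T) (g h : T -> R) (c Mg Mh : R) :
  0 <= c -> (forall x, 0 <= g x) -> (forall x, 0 <= h x) ->
  (\esum_(x in A) (g x)%:E <= Mg%:E)%E -> (\esum_(x in B) (h x)%:E <= Mh%:E)%E ->
  (\esum_(p in (A `*` B)%classic) (c * g p.1 * h p.2)%:E <= (c * Mg * Mh)%:E)%E.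
Proof.
move=> c0 g0 h0 hg hh.
have Mh0 : 0 <= Mh.
  by rewrite -lee_fin; apply: le_trans hh; apply: esum_ge0 => x _; rewrite lee_fin.
have ge0E (f : T -> R) : (forall x, 0 <= f x) -> forall x, (0 <= (f x)%:E)%E.
  by move=> f0 x; rewrite lee_fin.
rewrite -(esum_esum (I:=A) (J:=fun _ => B) (a:=fun i j => (c * g i * h j)%:E)); last first.
  by move=> i j _ _; rewrite lee_fin !mulr_ge0.
have inner i : (\esum_(j in B) (c * g i * h j)%:E <= ((c * Mh) * g i)%:E)%E.
  apply: (@le_trans _ _ (\esum_(j in B) ((c * g i)%:E * (h j)%:E))%E).
    by apply: le_esum => j _; rewrite -EFinM.
  apply: le_trans (esumZ_le B (mulr_ge0 c0 (g0 i)) (ge0E _ h0)) _.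
  by rewrite mulrAC [X in (_ <= X)%E]EFinM lee_wpmul2l // lee_fin mulr_ge0.
apply: (@le_trans _ _ (\esum_(i in A) ((c * Mh)%:E * (g i)%:E))%E).
  by apply: le_esum => i _; rewrite -EFinM; exact: inner.
apply: le_trans (esumZ_le A (mulr_ge0 c0 Mh0) (ge0E _ g0)) _.
by rewrite mulrAC [X in (_ <= X)%E]EFinM lee_wpmul2l // lee_fin mulr_ge0.
Qed.

Lemma fine_bounds (x : \bar R) (M : R) : (0 <= x)%E -> (x <= M%:E)%E -> 0 <= fine x <= M.
Proof. by case: x => [r||] //=; rewrite !lee_fin => -> ->. Qed.

Lemma rsum_le (T : choiceType) (D : set T) (g : T -> R) (M : R) :
  (\esum_(x in D) (`|g x|)%:E <= M%:E)%E -> `|rsum D g| <= 2 * M.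
Proof.
move=> H; rewrite /rsum.
have part (f : T -> R) : (forall x, f x <= `|g x|) ->
    0 <= fine (\esum_(x in D) (Num.max (f x) 0)%:E)%E <= M.
  move=> fg; apply: fine_bounds; first by apply: esum_ge0 => x _; rewrite lee_fin le_max lexx orbT.
  by apply: le_trans H; apply: le_esum => x _; rewrite lee_fin ge_max normr_ge0 fg.
have /andP[a0 aM] := part g (fun x => ler_norm (g x)).
have /andP[b0 bM] : 0 <= fine (\esum_(x in D) (Num.max (- g x) 0)%:E)%E <= M.
  by apply: part => x; rewrite -normrN ler_norm.
move: a0 aM b0 bM; set a := fine _; set b := fine _ => a0 aM b0 bM.
apply: (le_trans (ler_normB a b)); rewrite !ger0_norm //; lra.
Qed.

Lemma csum_le (T : choiceType) (D : set T) (f : T -> R[i]) (M : R) :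
  (\esum_(x in D) (nc (f x))%:E <= M%:E)%E -> nc (csum D f) <= 4 * M.
Proof.
move=> H; rewrite /csum.
have H1 : `|rsum D (fun x => complex.Re (f x))| <= 2 * M.
  by apply: rsum_le; apply: le_trans H; apply: le_esum => x _; rewrite lee_fin nc_Re.
have H2 : `|rsum D (fun x => complex.Im (f x))| <= 2 * M.
  by apply: rsum_le; apply: le_trans H; apply: le_esum => x _; rewrite lee_fin nc_Im.
apply: (le_trans (le_normcD _ _)).
rewrite Normc.normcM nc_i mul1r !nc_real; lra.
Qed.

Lemma inorm_ge0 d (j : idx d) : 0 <= inorm R j.
Proof. by rewrite /inorm sqrtr_ge0. Qed.

Lemma inormN d (j : idx d) : inorm R (- j) = inorm R j.
Proof.
by rewrite /inorm; congr Num.sqrt; apply: eq_bigr => i _; rewrite !mxE rmorphN sqrrN.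
Qed.

Lemma inorm_sq d (j : idx d) :
  inorm R j ^+ 2 = (\sum_(i < d) (j ord0 i * j ord0 i))%:~R.
Proof.
rewrite /inorm sqr_sqrtr; last by apply: sumr_ge0 => i _; rewrite sqr_ge0.
by rewrite rmorph_sum; apply: eq_bigr => i _; rewrite rmorphM.
Qed.

Lemma inorm_d1 (j : idx 1) : inorm R j = (`|j ord0 ord0|)%:~R.
Proof. by rewrite /inorm big_ord1 sqrtr_sqr intr_norm. Qed.

Lemma inorm_ge1 d (j : idx d) : j != 0 -> 1 <= inorm R j.
Proof.
move=> j0.
have [i ji] : exists i, j ord0 i != 0.
  apply/existsP; apply: contraR j0 => /existsPn H; apply/eqP/rowP => i.
  by rewrite mxE; apply/eqP; move: (H i); rewrite negbK.
have s1 : (1 <= \sum_(i0 < d) (j ord0 i0 * j ord0 i0))%R.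
  rewrite (bigD1 i) //= -[1%R]addr0; apply: lerD; first by lia.
  by apply: sumr_ge0 => k _; rewrite -expr2 sqr_ge0.
have : 1 <= inorm R j ^+ 2 by rewrite inorm_sq ler1z.
by rewrite -{1}(expr1n R 2) ler_pXn2r // ?nnegrE ?inorm_ge0.
Qed.

Lemma esum_reflect d (g : idx d -> \bar R) :
  (\esum_(j in nzidx d) g (- j)%R = \esum_(j in nzidx d) g j)%E.
Proof.
symmetry; apply: (@reindex_esum R _ _ (nzidx d) (nzidx d) (fun j => - j)).
split.
- by move=> x; rewrite /nzidx /= oppr_eq0.
- by move=> x y _ _; apply: oppr_inj.
- move=> y Sy; exists (- y); last by rewrite opprK.
  by move: Sy; rewrite /nzidx /= oppr_eq0.
Qed.

(* The weight w(t) = t^2 * tfac d t, with tfac d t = t^{2 m0 - 2}. *)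

Definition tfac (d : nat) (x : R) : R := if d == 1%N then 1 else x.
Definition weight (d : nat) (x : R) : R := x ^+ 2 * tfac d x.

Lemma tfac_ge1 d (x : R) : 1 <= x -> 1 <= tfac d x.
Proof. by rewrite /tfac; case: ifP. Qed.

Lemma weight_ge0 d (x : R) : 0 <= x -> 0 <= weight d x.
Proof. by move=> x0; rewrite /weight /tfac mulr_ge0 ?sqr_ge0 //; case: ifP. Qed.

Lemma weight_powR d (x : R) : 0 <= x -> x `^ (2 * m0 R d) = weight d x.
Proof.
move=> x0; rewrite /weight /tfac /m0; case: ifP => _.
  by rewrite !mulr1 powR_mulrn.
have -> : (2 : R) * (3%:R / 2%:R) = 3%:R by field.
by rewrite powR_mulrn // exprSr.
Qed.

(* The divided difference (1 - δ_x^y)/(x - y) at lattice norms.  At integers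
   it is at most 1; when only the squares are integers, |x - y| >= 1/(x + y)
   gives the bound 3x. *)

Lemma qd_int (p q : int) : `|qd (p%:~R : R) q%:~R| <= 1.
Proof.
rewrite /qd; case: eqP => [_|pq]; first by rewrite normr0 ler01.
have h1 : 1 <= `|(p - q)%:~R : R|.
  have : p - q != 0 by apply: contra_not_neq pq => /eqP; rewrite subr_eq0 => /eqP ->.
  by rewrite -intr_norm ler1z; lia.
by rewrite div1r normfV invf_le1 // -rmorphB /=; lra.
Qed.

Lemma qd_sqint (x y : R) (p q : int) :
  1 <= x -> 1 <= y -> x ^+ 2 = p%:~R -> y ^+ 2 = q%:~R -> `|qd x y| <= 3 * x.
Proof.
move=> x1 y1 hx hy; rewrite /qd; case: eqP => [_|xy]; first by rewrite normr0; lra.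
have pq : p - q != 0.
  apply: contra_not_neq xy => /eqP; rewrite subr_eq0 => /eqP epq.
  have : (x - y) * (x + y) = 0 by rewrite -subr_sqr hx hy epq subrr.
  move/eqP; rewrite mulf_eq0 => /orP[/eqP h|/eqP h]; lra.
have h1 : 1 <= `|(p - q)%:~R : R| by rewrite -intr_norm ler1z; lia.
rewrite rmorphB /= -hx -hy subr_sqr normrM in h1.
rewrite (ger0_norm (x := x + y)) in h1; last by lra.
have e0 : 0 < `|x - y| by rewrite normr_gt0 subr_eq0; apply/eqP.
have key : 1 <= 3 * x * `|x - y|.
  case: (lerP y (2 * x)) => hyx; first by apply: (le_trans h1); nra.
  have : x <= `|x - y| by rewrite distrC ger0_norm; lra.
  nra.
by rewrite div1r normfV -[X in X <= _]mul1r ler_pdivrMr.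
Qed.

Lemma qd_inorm d (j k : idx d) : j != 0 -> k != 0 ->
  `|qd (inorm R j) (inorm R k)| <= 3 * tfac d (inorm R j).
Proof.
move=> j0 k0; rewrite /tfac; case: eqP => [d1|_].
  by subst d; rewrite !inorm_d1; apply: le_trans (qd_int _ _) _; lra.
by apply: qd_sqint; rewrite ?inorm_ge1 ?inorm_sq.
Qed.

Lemma multiplier1_le d (a c q : R) : 1 <= a -> 1 <= c -> `|q| <= 3 * tfac d a ->
  `|a ^+ 2 * a ^+ 2 * (1 / (a + c) - q)| <= 10 * weight d a * weight d a.
Proof.
move=> a1 c1; rewrite /weight; move: (tfac d a) (tfac_ge1 d a1) => t t1 hq.
have h1 : `|1 / (a + c)| <= 1 by rewrite div1r normfV invf_le1 ger0_norm; lra.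
have h2 : `|1 / (a + c) - q| <= 10 * t * t.
  by apply: (le_trans (ler_normB _ _)); nra.
have a2 : 0 <= a ^+ 2 * a ^+ 2 by rewrite mulr_ge0 ?sqr_ge0.
rewrite normrM (ger0_norm a2).
have -> : 10 * (a ^+ 2 * t) * (a ^+ 2 * t) = (a ^+ 2 * a ^+ 2) * (10 * t * t) by ring.
exact: ler_wpM2l.
Qed.

Lemma multiplier2_le d (a b : R) : 1 <= a -> 1 <= b ->
  `|a * b * (a + b)| <= 10 * weight d a * weight d b.
Proof.
move=> a1 b1; rewrite /weight; move: (tfac d a) (tfac d b) (tfac_ge1 d a1) (tfac_ge1 d b1).
move=> ta tb t1 t2.
rewrite ger0_norm; last by rewrite !mulr_ge0 //; lra.
have h : a * b * (a + b) <= 2 * (a ^+ 2 * b ^+ 2).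
  have -> : 2 * (a ^+ 2 * b ^+ 2) = a * b * (2 * (a * b)) by ring.
  by apply: ler_wpM2l; rewrite ?mulr_ge0 //; nra.
have h3 : a ^+ 2 * b ^+ 2 <= (a ^+ 2 * ta) * (b ^+ 2 * tb).
  have -> : (a ^+ 2 * ta) * (b ^+ 2 * tb) = (a ^+ 2 * b ^+ 2) * (ta * tb) by ring.
  rewrite ler_peMr ?mulr_ge0 ?sqr_ge0 //; nra.
have : 0 <= a ^+ 2 * b ^+ 2 by rewrite mulr_ge0 ?sqr_ge0.
lra.
Qed.

Lemma multiplier3_le d (a b q : R) : 1 <= a -> 1 <= b -> `|q| <= 3 * tfac d b ->
  `|a ^+ 2 * b * (6%:R + b / (b + a) + b * q)| <= 10 * weight d a * weight d b.
Proof.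
move=> a1 b1; rewrite /weight; move: (tfac d a) (tfac d b) (tfac_ge1 d a1) (tfac_ge1 d b1).
move=> ta tb t1 t2 hq.
have hf : `|b / (b + a)| <= 1.
  by rewrite normf_div !ger0_norm ?ler_pdivrMr; lra.
have hbq : `|b * q| <= 3 * b * tb by rewrite normrM ger0_norm; nra.
have hs : `|6%:R + b / (b + a) + b * q| <= 10 * b * tb.
  have h6 : `|(6%:R : R) + b / (b + a)| <= 7.
    by apply: le_trans (ler_normD _ _) _; rewrite (ger0_norm (x := 6%:R)) //; lra.
  by apply: le_trans (ler_normD _ _) _; nra.
have p0 : 0 <= a ^+ 2 * b by rewrite mulr_ge0 ?sqr_ge0 //; lra.
rewrite normrM (ger0_norm p0); apply: le_trans (ler_wpM2l p0 hs) _.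
have -> : a ^+ 2 * b * (10 * b * tb) = 10 * (a ^+ 2 * b ^+ 2 * tb) by ring.
have -> : 10 * (a ^+ 2 * ta) * (b ^+ 2 * tb) = 10 * (a ^+ 2 * b ^+ 2 * tb) * ta by ring.
by rewrite ler_peMr // !mulr_ge0 ?sqr_ge0 //; lra.
Qed.

Lemma multiplier4_le d (a b c : R) : 1 <= a -> 1 <= b -> 1 <= c -> c = a - b ->
  `|a * b * c| <= 10 * weight d a * weight d b.
Proof.
move=> a1 b1 c1 hc; apply: le_trans (multiplier2_le d a1 b1).
have ab0 : 0 <= a * b by apply: mulr_ge0; lra.
rewrite !ger0_norm ?ler_wpM2l //; try lra; apply: mulr_ge0 => //; lra.
Qed.

(* Weighted pair sums: pairw x y j = |x_j| |y_{-j}| w(|j|), and the energy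
   density of u, whose sum over j is ||u||_{m0}^2. *)

Definition pairw d (x y : fcoef R d) (j : idx d) : R :=
  nc (x j) * nc (y (- j)) * weight d (inorm R j).

Definition energy d (u : fcoef R d) (j : idx d) : R :=
  nc (u j) ^+ 2 * weight d (inorm R j).

Lemma pairw_ge0 d (x y : fcoef R d) j : 0 <= pairw x y j.
Proof.
by apply: mulr_ge0; [apply: mulr_ge0; apply: nc_ge0 | apply/weight_ge0/inorm_ge0].
Qed.

Lemma energy_ge0 d (u : fcoef R d) j : 0 <= energy u j.
Proof. by apply: mulr_ge0; [apply: sqr_ge0 | apply/weight_ge0/inorm_ge0]. Qed.

Lemma pair_csum_le d (P : set (idx d * idx d)) (x y x' y' : fcoef R d) (z : R[i])
    (r : idx d * idx d -> R) (M : R) :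
  (\esum_(j in nzidx d) (pairw x y j)%:E <= M%:E)%E ->
  (\esum_(j in nzidx d) (pairw x' y' j)%:E <= M%:E)%E ->
  (P `<=` nzidx d `*` nzidx d)%classic ->
  (forall p, P p -> `|r p| <= 10 * weight d (inorm R p.1) * weight d (inorm R p.2)) ->
  nc (csum P (fun p => x p.1 * y (- p.1) * x' p.2 * y' (- p.2) * z * (r p)%:C))
    <= 40 * (M * M) * nc z.
Proof.
move=> hxy hxy' PS hr.
have -> : 40 * (M * M) * nc z = 4 * (10 * nc z * M * M) by ring.
apply: csum_le.
apply: (@le_trans _ _ (\esum_(p in P) (10 * nc z * pairw x y p.1 * pairw x' y' p.2)%:E)%E).
  apply: le_esum => p Pp; rewrite lee_fin !Normc.normcM nc_real.
  have -> : 10 * nc z * pairw x y p.1 * pairw x' y' p.2 =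
    nc (x p.1) * nc (y (- p.1)) * nc (x' p.2) * nc (y' (- p.2)) * nc z
    * (10 * weight d (inorm R p.1) * weight d (inorm R p.2)) by rewrite /pairw; ring.
  by apply: ler_wpM2l (hr p Pp); rewrite !mulr_ge0 ?nc_ge0.
have c0 : 0 <= 10 * nc z by rewrite mulr_ge0 ?nc_ge0.
apply: le_trans (esum_prod_le c0 (@pairw_ge0 _ x y) (@pairw_ge0 _ x' y') hxy hxy').
apply: esum_subset_le => // p _; rewrite lee_fin.
by apply: mulr_ge0; [apply: mulr_ge0 | ]; rewrite ?pairw_ge0.
Qed.

(* AM-GM: for x, y in {u, conj u} the pair density is dominated by the energy. *)
Lemma pairw_le_energy d (u x y : fcoef R d) j :
  (x = u \/ x = cconj u) -> (y = u \/ y = cconj u) ->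
  pairw x y j <= energy u j + energy u (- j).
Proof.
rewrite /pairw /energy inormN -mulrDl.
have w0 := weight_ge0 d (inorm_ge0 j).
have a0 := nc_ge0 (u j); have b0 := nc_ge0 (u (- j)).
move=> hx hy; apply: ler_wpM2r => //.
by case: hx hy => -> [] ->; rewrite /cconj ?opprK ?nc_conj; nra.
Qed.

Lemma pairw_esum_le d (u x y : fcoef R d) (N : R) :
  (x = u \/ x = cconj u) -> (y = u \/ y = cconj u) ->
  (\esum_(j in nzidx d) (energy u j)%:E = N%:E)%E ->
  (\esum_(j in nzidx d) (pairw x y j)%:E <= (N + N)%:E)%E.
Proof.
move=> hx hy hN.
apply: (@le_trans _ _ (\esum_(j in nzidx d) ((energy u j)%:E + (energy u (- j))%:E))%E).
  by apply: le_esum => j _; rewrite -EFinD lee_fin pairw_le_energy.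
rewrite esumD => [|j _|j _]; rewrite ?lee_fin ?energy_ge0 //.
by rewrite (esum_reflect (fun j => (energy u j)%:E)) hN.
Qed.

Lemma W51_pointwise d (u v : fcoef R d) (M : R) (k : idx d) :
  (\esum_(j in nzidx d) (pairw u u j)%:E <= M%:E)%E ->
  (\esum_(j in nzidx d) (pairw v v j)%:E <= M%:E)%E ->
  (\esum_(j in nzidx d) (pairw u v j)%:E <= M%:E)%E ->
  k != 0 ->
  nc (W51 u v k) <= 160 * (M * M) * (nc (u k) + nc (v k)).
Proof.
move=> Huu Hvv Huv k0; have k1 := inorm_ge1 k0.
rewrite /W51 (negbTE k0); cbv beta zeta.
apply: (le_trans (nc_lincomb4 _ _ _ _ _ _ _ _));
  try by [apply: nc_idiv | apply: nc_natidiv].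
set A := 40 * (M * M) * nc (u k); set B := 40 * (M * M) * nc (v k).
apply: (@le_trans _ _ (A + B + B + B)).
  repeat apply: lerD.
  - apply: (pair_csum_le _ Huu Hvv) => [p [? [? _]] // | [j l] /= [j0 [l0 e]]].
    have := qd_inorm l0 k0; rewrite -e => hq.
    exact: multiplier1_le (inorm_ge1 j0) k1 hq.
  - apply: (pair_csum_le _ Huu Huu) => [p [? [? _]] // | [j l] /= [j0 [l0 e]]].
    by rewrite e; apply: multiplier2_le; apply: inorm_ge1.
  - apply: (pair_csum_le _ Huu Huv) => [p [? [? _]] // | [j l] /= [j0 [l0 e]]].
    exact: multiplier3_le (inorm_ge1 j0) (inorm_ge1 l0) (qd_inorm l0 j0).
  - apply: (pair_csum_le _ Huu Hvv) => [p [? [? _]] // | [j l] /= [j0 [l0 e]]].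
    exact: multiplier4_le (inorm_ge1 j0) (inorm_ge1 l0) k1 e.
have MM : 0 <= M * M by rewrite -expr2 sqr_ge0.
have A0 : 0 <= A by rewrite /A mulr_ge0 ?nc_ge0 // mulr_ge0.
have B0 : 0 <= B by rewrite /B mulr_ge0 ?nc_ge0 // mulr_ge0.
have -> : 160 * (M * M) * (nc (u k) + nc (v k)) = 4 * A + 4 * B by rewrite /A /B; ring.
lra.
Qed.

Lemma W52_pointwise d (u v : fcoef R d) (M : R) (k : idx d) :
  (\esum_(j in nzidx d) (pairw u u j)%:E <= M%:E)%E ->
  (\esum_(j in nzidx d) (pairw v v j)%:E <= M%:E)%E ->
  (\esum_(j in nzidx d) (pairw v u j)%:E <= M%:E)%E ->
  k != 0 ->
  nc (W52 u v k) <= 160 * (M * M) * (nc (u k) + nc (v k)).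
Proof.
by move=> Huu Hvv Hvu k0; rewrite /W52 normcN addrC; apply: W51_pointwise.
Qed.

Lemma Hnorm2E d s (u : fcoef R d) :
  Hnorm2 s u = (\esum_(j in nzidx d) (nc (u j) ^+ 2 * inorm R j `^ (2 * s))%:E)%E.
Proof. by []. Qed.

Lemma Hnorm2_ge0 d s (u : fcoef R d) : (0 <= Hnorm2 s u)%E.
Proof. by apply: esum_ge0 => j _; rewrite lee_fin mulr_ge0 ?sqr_ge0 ?powR_ge0. Qed.

Lemma Hnorm_finite d s (u : fcoef R d) : (Hnorm s u < +oo)%E ->
  exists N, 0 <= N /\ Hnorm2 s u = N%:E /\ Hnorm s u = (Num.sqrt N)%:E.
Proof.
move: (Hnorm2_ge0 s u); rewrite /Hnorm; case: (Hnorm2 s u) => [r||] //= r0 _.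
by exists r.
Qed.

Lemma Hnorm2_cconj d s (u : fcoef R d) : Hnorm2 s (cconj u) = Hnorm2 s u.
Proof.
rewrite !Hnorm2E -(esum_reflect (fun j => (nc (u j) ^+ 2 * inorm R j `^ (2 * s))%:E)).
by apply: eq_esum => j _; rewrite /cconj nc_conj inormN.
Qed.

Lemma Hnorm_le_sqrt d s (W : fcoef R d) (c : R) :
  (Hnorm2 s W <= c%:E)%E -> (Hnorm s W <= (Num.sqrt c)%:E)%E.
Proof.
move: (Hnorm2_ge0 s W); rewrite /Hnorm; case: (Hnorm2 s W) => [r||] //=.
by rewrite !lee_fin => _; apply: ler_wsqrtr.
Qed.

Lemma sqr_le_split (a x y B : R) : 0 <= a -> a <= B * (x + y) ->
  a ^+ 2 <= 2 * (B * B) * (x ^+ 2 + y ^+ 2).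
Proof.
move=> a0 ha; have : a ^+ 2 <= (B * (x + y)) ^+ 2 by rewrite ler_sqr ?nnegrE //; lra.
have : 0 <= (B * (x - y)) ^+ 2 by apply: sqr_ge0.
have -> : (B * (x + y)) ^+ 2 = 2 * (B * B) * (x ^+ 2 + y ^+ 2) - (B * (x - y)) ^+ 2 by ring.
lra.
Qed.

Lemma Hnorm_pointwise_le d s (W u v : fcoef R d) (B Ns : R) : 0 <= B ->
  (forall k, k != 0 -> nc (W k) <= B * (nc (u k) + nc (v k))) ->
  Hnorm2 s u = Ns%:E -> Hnorm2 s v = Ns%:E ->
  (Hnorm s W <= (2 * B * Num.sqrt Ns)%:E)%E.
Proof.
move=> B0 hW hu hv.
have -> : 2 * B * Num.sqrt Ns = Num.sqrt (2 * (B * B) * (Ns + Ns)).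
  have -> : 2 * (B * B) * (Ns + Ns) = (2 * B) ^+ 2 * Ns by ring.
  by rewrite sqrtrM ?sqr_ge0 // sqrtr_sqr ger0_norm // mulr_ge0.
apply: Hnorm_le_sqrt; rewrite Hnorm2E.
have term0 (x : fcoef R d) k : (0 <= (nc (x k) ^+ 2 * inorm R k `^ (2 * s))%:E)%E.
  by rewrite lee_fin; apply: mulr_ge0; [apply: sqr_ge0 | apply: powR_ge0].
apply: (@le_trans _ _ (\esum_(k in nzidx d)
    ((2 * (B * B))%:E * ((nc (u k) ^+ 2 * inorm R k `^ (2 * s))%:E
                      + (nc (v k) ^+ 2 * inorm R k `^ (2 * s))%:E)))%E).
  apply: le_esum => k k0; rewrite -EFinD -EFinM lee_fin -mulrDl (mulrA (2 * (B * B))).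
  by apply: ler_wpM2r; [apply: powR_ge0 | apply: sqr_le_split (nc_ge0 _) (hW k k0)].
apply: le_trans (esumZ_le _ _ _) _.
- by apply: mulr_ge0 => //; apply: mulr_ge0.
- by move=> k; rewrite adde_ge0.
by rewrite esumD // -!Hnorm2E hu hv -EFinD -EFinM.
Qed.

End Estimates.

(* Lemma 5.2: with N = ||u||_{m0}^2 and ||u||_s^2 = Ns, both components are
   bounded by 2 * 160 (2N)^2 sqrt Ns, i.e. C = 2560. *)
Theorem lemma5p2 (R : realType) (d : nat) (hd : (0 < d)%N) :
  exists C : R, forall (s : R) (u : fcoef R d),
    0 <= s ->
    u 0 = 0 ->
    (Hnorm s u < +oo)%E ->
    (Hnorm (m0 R d) u < +oo)%E ->
    (Hnorm s (W51 u (cconj u)) + Hnorm s (W52 u (cconj u))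
       <= C%:E * (Hnorm (m0 R d) u) ^+ 4 * Hnorm s u)%E.
Proof.
exists 2560 => s u _ _ Hs Hm.
have [Ns [_ [Hs2 Hs1]]] := Hnorm_finite Hs.
have [N [N0 [Hm2 Hm1]]] := Hnorm_finite Hm.
set v := cconj u.
have hE : (\esum_(j in nzidx d) (energy u j)%:E = N%:E)%E.
  rewrite -Hm2 Hnorm2E; apply: eq_esum => j _.
  by rewrite /energy weight_powR ?inorm_ge0.
have pw x y : (x = u \/ x = v) -> (y = u \/ y = v) ->
    (\esum_(j in nzidx d) (pairw x y j)%:E <= (N + N)%:E)%E.
  by move=> hx hy; apply: pairw_esum_le hE.
set B := 160 * ((N + N) * (N + N)).
have B0 : 0 <= B by rewrite /B !mulr_ge0 ?addr_ge0.
have Hv2 : Hnorm2 s v = Ns%:E by rewrite Hnorm2_cconj.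
have e1 : (Hnorm s (W51 u v) <= (2 * B * Num.sqrt Ns)%:E)%E.
  apply: (Hnorm_pointwise_le B0 _ Hs2 Hv2) => k k0.
  by apply: W51_pointwise k0; apply: pw; auto.
have e2 : (Hnorm s (W52 u v) <= (2 * B * Num.sqrt Ns)%:E)%E.
  apply: (Hnorm_pointwise_le B0 _ Hs2 Hv2) => k k0.
  by apply: W52_pointwise k0; apply: pw; auto.
rewrite Hm1 Hs1; apply: le_trans (leeD e1 e2) _.
rewrite -EFinD -EFin_expe -!EFinM lee_fin.
have -> : Num.sqrt N ^+ 4 = N * N by rewrite -[4%N]/(2 * 2)%N exprM sqr_sqrtr // expr2.
suff -> : 2 * B * Num.sqrt Ns + 2 * B * Num.sqrt Ns = 2560 * (N * N) * Num.sqrt Ns by [].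
by rewrite /B; ring.
Qed.
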